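(* Let $m$ be odd, $q=2^m$, $R=GR(4,m)$ with Teichmüller set $\mathcal{T}$, let $B\in\mathcal{T}$ with $B\ne0$, and let $d\in\mathbb{F}_q$. The number of quadruples $(X,Y,Z,W)\in\mathcal{T}^4$ satisfying $$X+Y+Z+W=2B,\qquad x^3+y^3+z^3+w^3=b^3d$$ is $3\cdot2^m$ if $d=0$, is $0$ if $d\in M_0\cup M_1$, and is $6\cdot2^m$ if $d\in M_3$.
   Context: $R=GR(4,m)=\mathbb{Z}_4[x]/(f(x))$ with $f$ monic of degree $m$ irreducible mod 2; $\mathcal{T}=\{0,1,\beta,\dots,\beta^{q-2}\}$ with $\beta\in R^*$ of order $q-1$; lower-case letters denote reductions mod 2 (in $\mathbb{F}_q$) of the corresponding elements of $\mathcal{T}$. For $c\in\mathbb{F}_q$ let $f_c(x)=x^3+x+c$, and for $i\in\{0,1,3\}$ let $M_i=\{c\in\mathbb{F}_q^*: f_c(x)=0 \text{ has exactly } i \text{ solutions in } \mathbb{F}_q\}$. *)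

From HB Require Import structures.
From mathcomp Require Import all_boot all_order all_algebra all_field.
Set Implicit Arguments. Unset Strict Implicit. Unset Printing Implicit Defensive.
Local Open Scope ring_scope.

(* Galois ring R = GR(4,m) = Z_4[x]/(f), with f monic of degree m.
   Elements of R are represented by their (unique) reduced representative,
   a polynomial of degree < m, stored as its coefficient row vector 'rV['Z_4]_m.
   Addition in R is coefficientwise addition of row vectors. *)
Definition GR (m : nat) := 'rV['Z_4]_m.

Definition GRmul (m : nat) (f : {poly 'Z_4}) (u v : GR m) : GR m :=
  poly_rV (Pdiv.Ring.rmodp (rVpoly u * rVpoly v) f).

Definition GRone (m : nat) (f : {poly 'Z_4}) : GR m :=
  poly_rV (Pdiv.Ring.rmodp 1 f).

Definition GRexp (m : nat) (f : {poly 'Z_4}) (u : GR m) (n : nat) : GR m :=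
  iter n (GRmul f u) (GRone m f).

Definition has_order_q1 (m : nat) (f : {poly 'Z_4}) (beta : GR m) : Prop :=
  GRexp f beta (2 ^ m).-1 = GRone m f /\
  (forall k : nat, (0 < k < (2 ^ m).-1)%N -> GRexp f beta k != GRone m f).

Definition Teich (m : nat) (f : {poly 'Z_4}) (beta : GR m) : {set GR m} :=
  0 |: [set GRexp f beta (nat_of_ord i) | i : 'I_((2 ^ m).-1)].

Definition red2 (a : 'Z_4) : 'F_2 := (nat_of_ord a)%:R.

Definition fbar (f : {poly 'Z_4}) : {poly 'F_2} := map_poly red2 f.

(* F_q = F_2[x]/(fbar), elements represented by reduced representatives *)
Definition Fq (m : nat) := 'rV['F_2]_m.

Definition Fqmul (m : nat) (f : {poly 'Z_4}) (u v : Fq m) : Fq m :=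
  poly_rV ((rVpoly u * rVpoly v) %% fbar f).

Definition Fqcube (m : nat) (f : {poly 'Z_4}) (u : Fq m) : Fq m :=
  Fqmul f u (Fqmul f u u).

Definition redR (m : nat) (X : GR m) : Fq m := map_mx red2 X.

Definition Mset (m : nat) (f : {poly 'Z_4}) (i : nat) : {set Fq m} :=
  [set c : Fq m | (c != 0) &&
     (#|[set y : Fq m | Fqcube f y + y + c == 0]| == i)].
Arguments Mset : clear implicits.

From HB Require Import structures.
From mathcomp Require Import all_boot all_order all_algebra all_field.
From mathcomp Require Import ring.
Import GRing.Theory Pdiv.CommonRing Pdiv.RingMonic.
Local Open Scope ring_scope.

(* Every element X of the Teichmueller set T is a square u^2 in R = GR(4,m), and
   u mod 2 = sqrt(x) determines X, so X |-> sqrt(x) is a bijection T -> F_q.  Writing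
   X_i = u_i^2 and B = u_0^2, the equation X_1 + X_2 + X_3 + X_4 = 2B holds iff
   sum u_i = 0 and e_2(u) = u_0^2 mod 2; hence the count equals the number of
   a in F_q^4 with sum a_i = 0, e_2(a) = b and sum a_i^6 = b^3 d.  The system is
   invariant under translation, and in the differences s = a_1 + a_2, u = a_1 + a_3 it
   reads s^2 + su + u^2 = b and (s(s^2 + b))^2 = b^3 d.  Substituting s^2 = bt, the second
   equation becomes t^3 + t + d = 0, while for t <> 0 the first is the Artin-Schreier
   equation v^2 + v = 1 + 1/t (u = sv), which is solvable (with two solutions) iff the
   cubic has a root other than t.  So N = q * sum over the roots t of n(t), where
   n(0) = 1 and n(t) is 2 or 0 according as the cubic has another root or not. *)

Definition sigma2 {R : comNzRingType} (a : R * R * R * R) : R :=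
  a.1.1.1 * a.1.1.2 + a.1.1.1 * a.1.2 + a.1.1.1 * a.2
  + a.1.1.2 * a.1.2 + a.1.1.2 * a.2 + a.1.2 * a.2.

Lemma sum_pair (I J : finType) (F : I * J -> nat) :
  (\sum_p F p = \sum_i \sum_j F (i, j))%N.
Proof. by rewrite pair_bigA; apply: eq_bigr => -[i j]. Qed.

Section Char2FiniteField.

Context {K : finFieldType} {n : nat}.
Hypothesis cardK : #|K| = (2 ^ n)%N.

Lemma pchar2 : 2 \in [pchar K].
Proof. exact: card_finPcharP cardK _. Qed.

(* Identities of characteristic 2 are proved below as ring identities up to an
   explicit even term. *)
Lemma eq_pchar2 (x y z : K) : x = y + z *+ 2 -> x = y.
Proof. by move=> ->; rewrite (mulrn_pchar pchar2) addr0. Qed.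

Lemma addr_eq0_pchar2 (x y : K) : (x + y == 0) = (x == y).
Proof. by rewrite addr_eq0 (oppr_pchar2 pchar2). Qed.

Lemma sqrrD_pchar2 (x y : K) : (x + y) ^+ 2 = x ^+ 2 + y ^+ 2.
Proof. by rewrite sqrrD (mulrn_pchar pchar2) addr0. Qed.

Lemma sqrf_inj : injective (fun x : K => x ^+ 2).
Proof.
move=> x y /= /eqP; rewrite -addr_eq0_pchar2 -sqrrD_pchar2 expf_eq0 /=.
by rewrite addr_eq0_pchar2 => /eqP.
Qed.

Lemma n_gt0 : (0 < n)%N.
Proof. by have := finNzRing_gt1 K; rewrite cardK; case: (n). Qed.

Definition sqrtf (y : K) : K := y ^+ (#|K| %/ 2).

Lemma sqrtfK (y : K) : sqrtf y ^+ 2 = y.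
Proof.
rewrite -exprM divnK ?expf_card // cardK.
by rewrite -(prednK n_gt0) expnS dvdn_mulr.
Qed.

Lemma sqrK (x : K) : sqrtf (x ^+ 2) = x.
Proof. by apply: sqrf_inj; rewrite /= sqrtfK. Qed.

Lemma sqrtf0 : sqrtf 0 = 0.
Proof. by apply: sqrf_inj; rewrite /= sqrtfK expr0n. Qed.

Lemma card_artin_schreier (c : K) :
  #|[set v : K | v ^+ 2 + v + c == 0]| =
  if [exists v, v ^+ 2 + v + c == 0] then 2%N else 0%N.
Proof.
case: existsP => [[v0 root_v0] | no_root]; last first.
  apply/eqP; rewrite cards_eq0; apply/eqP/setP => v; rewrite !inE.
  by apply/idP => root_v; apply: no_root; exists v.
have -> : [set v : K | v ^+ 2 + v + c == 0] = [set v0; v0 + 1].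
  apply/setP => v; rewrite !inE.
  have -> : v ^+ 2 + v + c = (v + v0) * (v + (v0 + 1)) + (v0 ^+ 2 + v0 + c).
    by apply: (@eq_pchar2 _ _ (- (v * v0 + v0 ^+ 2 + v0))); ring.
  by rewrite (eqP root_v0) addr0 mulf_eq0 !addr_eq0_pchar2.
by rewrite cards2 -{1}[v0]addr0 (inj_eq (addrI v0)) eq_sym oner_eq0.
Qed.

Definition cubic_roots (D : K) : {set K} := [set t | t ^+ 3 + t + D == 0].

(* The roots of [v^2 + v + 1 + 1/t] are the square roots of [t'/t], [t'] ranging over
   the roots of the cubic other than [t]. *)
Lemma cubic_other_root {D t : K} : D != 0 -> t \in cubic_roots D ->
  [exists v, v ^+ 2 + v + (1 + t^-1) == 0] =
  [exists t' in cubic_roots D, t' != t].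
Proof.
rewrite inE => D_neq0 root_t.
have t_neq0 : t != 0 by apply: contraTneq root_t => ->; rewrite expr0n !add0r.
have cubic_shift t' : t' ^+ 3 + t' + D
    = (t ^+ 3 + t + D) + (t' - t) * (t' ^+ 2 + t * t' + t ^+ 2 + 1) by ring.
apply/existsP/existsP => [[v root_v] | [t' /andP [root_t' t'_neq_t]]].
  exists (t * v ^+ 2); rewrite inE cubic_shift (eqP root_t) add0r.
  have -> : (t * v ^+ 2) ^+ 2 + t * (t * v ^+ 2) + t ^+ 2 + 1
      = t ^+ 2 * (v ^+ 2 + v + (1 + t^-1)) ^+ 2.
    by rewrite !sqrrD_pchar2; field.
  rewrite (eqP root_v) expr0n !mulr0 eqxx /=.
  apply: contra_neq D_neq0 => t_v2.
  have v1 : v = 1.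
    by apply: sqrf_inj; apply: (mulfI t_neq0); rewrite /= t_v2 expr1n mulr1.
  move: root_v root_t; rewrite v1 !expr1n (addrr_pchar2 pchar2) add0r.
  rewrite addr_eq0_pchar2 eq_sym invr_eq1 => /eqP ->.
  by rewrite expr1n (addrr_pchar2 pchar2) add0r => /eqP.
have root_quad : t' ^+ 2 + t * t' + t ^+ 2 + 1 = 0.
  move: root_t'; rewrite inE cubic_shift (eqP root_t) add0r mulf_eq0 subr_eq0.
  by rewrite (negbTE t'_neq_t) => /eqP.
exists (sqrtf (t' / t)).
suff : (sqrtf (t' / t) ^+ 2 + sqrtf (t' / t) + (1 + t^-1)) ^+ 2 == 0.
  by rewrite expf_eq0.
rewrite !sqrrD_pchar2 sqrtfK.
have -> : (t' / t) ^+ 2 + t' / t + (1 ^+ 2 + t^-1 ^+ 2)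
    = t^-1 ^+ 2 * (t' ^+ 2 + t * t' + t ^+ 2 + 1) by field.
by rewrite root_quad mulr0.
Qed.

(* [a] stands for the square roots of the residues of the four Teichmueller elements,
   [b] for the residue of [B] and [D] for [d]. *)
Definition residue_system (b D : K) (a : K * K * K * K) :=
  [&& a.1.1.1 + a.1.1.2 + a.1.2 + a.2 == 0, sigma2 a == b &
      (a.1.1.1 ^+ 2) ^+ 3 + (a.1.1.2 ^+ 2) ^+ 3 + (a.1.2 ^+ 2) ^+ 3
      + (a.2 ^+ 2) ^+ 3 == b ^+ 3 * D].

Definition diff_system (b D s u : K) :=
  (s ^+ 2 + s * u + u ^+ 2 == b) && ((s * u * (s + u)) ^+ 2 == b ^+ 3 * D).

Lemma residue_system_translate (b D x s u : K) :
  residue_system b D (x, x + s, x + u, x + s + u) = diff_system b D s u.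
Proof.
rewrite /residue_system /diff_system /sigma2 /=.
have -> : x + (x + s) + (x + u) + (x + s + u) = 0.
  by apply: (@eq_pchar2 _ _ (x *+ 2 + s + u)); ring.
have -> : x * (x + s) + x * (x + u) + x * (x + s + u) + (x + s) * (x + u)
    + (x + s) * (x + s + u) + (x + u) * (x + s + u) = s ^+ 2 + s * u + u ^+ 2.
  by apply: (@eq_pchar2 _ _ ((x ^+ 2 + x * s + x * u) *+ 3 + s * u)); ring.
rewrite eqxx; congr (_ && (_ == _)).
rewrite -!exprM mulnC !exprM -!sqrrD_pchar2; congr (_ ^+ 2).
apply: (@eq_pchar2 _ _ (x ^+ 3 *+ 2 + x ^+ 2 * (s + u) *+ 3
  + x * (s ^+ 2 + s * u + u ^+ 2) *+ 3 + s ^+ 3 + u ^+ 3 + s ^+ 2 * u + s * u ^+ 2)).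
ring.
Qed.

Lemma residue_system_last (b D a1 a2 a3 a4 : K) :
  residue_system b D (a1, a2, a3, a4) =
  (a4 == a1 + a2 + a3) && residue_system b D (a1, a2, a3, a1 + a2 + a3).
Proof.
rewrite {1}/residue_system /= addr_eq0_pchar2 eq_sym.
case: eqP => [-> | _] //.
by rewrite /residue_system /= (addrr_pchar2 pchar2) eqxx.
Qed.

Lemma card_residue_system_diff (b D : K) :
  #|[set a | residue_system b D a]| =
  (#|K| * #|[set p : K * K | diff_system b D p.1 p.2]|)%N.
Proof.
rewrite -!sum1dep_card big_mkcond [in RHS]big_mkcond /= !sum_pair.
rewrite -sum_nat_const; apply: eq_big => [x | x _]; first by rewrite inE.
rewrite (reindex_inj (addrI x)).
apply: eq_bigr => s _; rewrite (reindex_inj (addrI x)).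
apply: eq_bigr => u _.
have sum3 : x + (x + s) + (x + u) = x + s + u.
  by apply: (@eq_pchar2 _ _ x); ring.
rewrite (bigD1 (x + s + u)) //= residue_system_last sum3 eqxx residue_system_translate /=.
by rewrite big1 ?addn0 // => a4 /negbTE a4_neq; rewrite residue_system_last sum3 a4_neq.
Qed.

Definition quad_fibre (b t : K) : {set K} :=
  let s := sqrtf (b * t) in [set u | s ^+ 2 + s * u + u ^+ 2 == b].

Lemma card_diff_system (b D : K) : b != 0 ->
  #|[set p : K * K | diff_system b D p.1 p.2]| =
  (\sum_(t in cubic_roots D) #|quad_fibre b t|)%N.
Proof.
move=> b_neq0.
have sqrt_inj : injective (fun t => sqrtf (b * t)).
  by move=> t1 t2 /(congr1 (fun x => x ^+ 2)); rewrite !sqrtfK => /(mulfI b_neq0).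
rewrite -sum1dep_card big_mkcond /= sum_pair (reindex_inj sqrt_inj) /=.
rewrite [RHS]big_mkcond; apply: eq_bigr => t _.
set s := sqrtf (b * t); have s2 : s ^+ 2 = b * t by rewrite sqrtfK.
have cubic_cond u : s ^+ 2 + s * u + u ^+ 2 = b ->
    ((s * u * (s + u)) ^+ 2 == b ^+ 3 * D) = (t \in cubic_roots D).
  move=> quad_u.
  have -> : s * u * (s + u) = s * (s ^+ 2 + b).
    by rewrite -quad_u; apply: (@eq_pchar2 _ _ (- s ^+ 3)); ring.
  rewrite exprMn sqrrD_pchar2 s2.
  have -> : b * t * ((b * t) ^+ 2 + b ^+ 2) = b ^+ 3 * (t ^+ 3 + t) by ring.
  by rewrite (inj_eq (mulfI (expf_neq0 3 b_neq0))) inE addr_eq0_pchar2.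
rewrite -sum1dep_card [in X in _ = X]big_mkcond /=; case: ifP => root_t.
  apply: eq_bigr => u _; rewrite /diff_system /=.
  by case: eqP => //= /cubic_cond ->; rewrite root_t.
rewrite big1 // => u _; rewrite /diff_system /=.
by case: eqP => //= /cubic_cond ->; rewrite root_t.
Qed.

Lemma card_quad_fibre0 (b : K) : #|quad_fibre b 0| = 1%N.
Proof.
rewrite -(cards1 (sqrtf b)); apply: eq_card => u; rewrite !inE mulr0 sqrtf0.
by rewrite expr0n mul0r !add0r -{1}[b]sqrtfK (inj_eq sqrf_inj).
Qed.

Lemma card_quad_fibre (b t : K) : b != 0 -> t != 0 ->
  #|quad_fibre b t| = #|[set v | v ^+ 2 + v + (1 + t^-1) == 0]|.
Proof.
move=> b_neq0 t_neq0; set s := sqrtf (b * t).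
have s2 : s ^+ 2 = b * t by rewrite sqrtfK.
have s_neq0 : s != 0.
  by apply: contraNneq (mulf_neq0 b_neq0 t_neq0) => s0; rewrite -s2 s0 expr0n.
rewrite -(card_preimset _ (mulfI s_neq0)); apply: eq_card => v; rewrite !inE.
have -> : s ^+ 2 + s * (s * v) + (s * v) ^+ 2 = s ^+ 2 * (1 + v + v ^+ 2) by ring.
rewrite s2 -addr_eq0_pchar2.
have -> : b * t * (1 + v + v ^+ 2) + b = b * t * (v ^+ 2 + v + (1 + t^-1)).
  by field.
by rewrite mulf_eq0 (negbTE (mulf_neq0 b_neq0 t_neq0)).
Qed.

Lemma cubic_root_neq0 {D t : K} : D != 0 -> t \in cubic_roots D -> t != 0.
Proof. by rewrite inE => D_neq0; apply: contraTneq => ->; rewrite expr0n !add0r. Qed.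

Lemma card_quad_fibre_root {b D t : K} : b != 0 -> D != 0 -> t \in cubic_roots D ->
  #|quad_fibre b t| =
  if [exists t' in cubic_roots D, t' != t] then 2%N else 0%N.
Proof.
move=> b_neq0 D_neq0 root_t.
rewrite card_quad_fibre ?(cubic_root_neq0 D_neq0 root_t) //.
by rewrite card_artin_schreier (cubic_other_root D_neq0 root_t).
Qed.

Lemma sum_quad_fibre_cubic0 {b : K} : b != 0 ->
  (\sum_(t in cubic_roots 0%R) #|quad_fibre b t| = 3)%N.
Proof.
move=> b_neq0.
have -> : cubic_roots 0 = [set 0; 1].
  apply/setP => t; rewrite !inE addr0.
  have -> : t ^+ 3 + t = t * (t + 1) ^+ 2 by apply: (@eq_pchar2 _ _ (- t ^+ 2)); ring.
  by rewrite mulf_eq0 expf_eq0 /= addr_eq0_pchar2.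
rewrite big_setU1 ?big_set1 /=; last by rewrite inE eq_sym oner_eq0.
rewrite card_quad_fibre0 card_quad_fibre ?oner_eq0 //.
rewrite invr1 (addrr_pchar2 pchar2) card_artin_schreier.
by case: existsP => // -[]; exists 0; rewrite expr0n !addr0.
Qed.

Lemma sum_quad_fibre_le1 {b D : K} : b != 0 -> D != 0 ->
  (#|cubic_roots D| <= 1)%N ->
  (\sum_(t in cubic_roots D) #|quad_fibre b t| = 0)%N.
Proof.
move=> b_neq0 D_neq0 le1; apply: big1 => t root_t.
rewrite (card_quad_fibre_root b_neq0 D_neq0 root_t).
case: existsP => // -[t' /andP [root_t' t'_neq_t]].
have pair_sub : [set t; t'] \subset cubic_roots D.
  by rewrite subUset !sub1set root_t root_t'.
by have := leq_trans (subset_leq_card pair_sub) le1; rewrite cards2 eq_sym t'_neq_t.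
Qed.

Lemma sum_quad_fibre_3 {b D : K} : b != 0 -> D != 0 ->
  #|cubic_roots D| = 3%N ->
  (\sum_(t in cubic_roots D) #|quad_fibre b t| = 6)%N.
Proof.
move=> b_neq0 D_neq0 card3.
rewrite (eq_bigr (fun=> 2%N)) ?sum_nat_const ?card3 // => t root_t.
rewrite (card_quad_fibre_root b_neq0 D_neq0 root_t); case: existsP => // -[].
have : (0 < #|cubic_roots D :\ t|)%N.
  by move: card3; rewrite (cardsD1 t) root_t add1n => -[->].
by case/card_gt0P => t'; rewrite in_setD1 => t'_other; exists t'; rewrite andbC.
Qed.

Lemma card_residue_system (b D : K) : b != 0 ->
  #|[set a | residue_system b D a]| =
  (#|K| * \sum_(t in cubic_roots D) #|quad_fibre b t|)%N.
Proof. by move=> b_neq0; rewrite card_residue_system_diff card_diff_system. Qed.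

Section TeichmullerLift.

(* The model case is the reduction [GR(4,m) -> F_q], whose kernel is [2 GR(4,m)]. *)
Context {S : comNzRingType} (r : {rmorphism S -> K}).
Hypothesis four_eq0 : 4%:R = 0 :> S.
Hypothesis kerr_sub2 : forall u, r u = 0 -> exists k, u = 2%:R * k.
Hypothesis ann2_sub_kerr : forall u, 2%:R * u = 0 -> r u = 0.

Lemma mul2_kerr {u : S} : r u = 0 -> 2%:R * u = 0.
Proof. by move=> /kerr_sub2 [k ->]; rewrite mulrA -natrM four_eq0 mul0r. Qed.

Lemma sqr_kerr {u : S} : r u = 0 -> u ^+ 2 = 0.
Proof.
move=> /[dup] ru0 /kerr_sub2 [k uE].
by rewrite expr2 {1}uE -mulrA mulrCA mul2_kerr // mulr0.
Qed.

Lemma sqr_eq_rmorph (u v : S) : r u = r v -> u ^+ 2 = v ^+ 2.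
Proof.
move=> ruv; have kerw : r (u - v) = 0 by rewrite rmorphB ruv subrr.
have -> : u = v + (u - v) by rewrite addrC subrK.
by rewrite sqrrD (sqr_kerr kerw) addr0 -mulrnAr -mulr_natl mul2_kerr // mulr0 addr0.
Qed.

Lemma r2_eq0 : r 2%:R = 0.
Proof. by rewrite rmorph_nat; apply/eqP; rewrite -(pcharf0 pchar2). Qed.

Lemma sum_sqr_eq_2sqr (u1 u2 u3 u4 u0 : S) :
  (u1 ^+ 2 + u2 ^+ 2 + u3 ^+ 2 + u4 ^+ 2 == 2%:R * u0 ^+ 2) =
  (r (u1 + u2 + u3 + u4) == 0) && (sigma2 (r u1, r u2, r u3, r u4) == r u0 ^+ 2).
Proof.
set s := u1 + u2 + u3 + u4; set e := sigma2 (u1, u2, u3, u4).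
have -> : u1 ^+ 2 + u2 ^+ 2 + u3 ^+ 2 + u4 ^+ 2 = s ^+ 2 - 2%:R * e.
  by rewrite /s /e /sigma2 /=; ring.
have -> : (sigma2 (r u1, r u2, r u3, r u4) == r u0 ^+ 2) = (r (e + u0 ^+ 2) == 0).
  by rewrite /e /sigma2 /= !rmorphD rmorphXn !rmorphM addr_eq0_pchar2.
apply/eqP/andP => [sum_sq | [/eqP rs0 /eqP re0]].
  have rs0 : r s = 0.
    suff : r s ^+ 2 == 0 by rewrite expf_eq0 /= => /eqP.
    by rewrite -rmorphXn -[s ^+ 2](subrK (2%:R * e)) sum_sq -mulrDr rmorphM r2_eq0 mul0r.
  split; first by rewrite rs0.
  apply/eqP/ann2_sub_kerr.
  by rewrite mulrDr -sum_sq (sqr_kerr rs0) sub0r addrN.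
by rewrite (sqr_kerr rs0) sub0r -[RHS]subr0 -(mul2_kerr re0); ring.
Qed.

Context {G : finType} (phi : G -> S) (T : {set G}).
Hypothesis phi_inj : injective phi.
Hypothesis T_sqr : forall X, X \in T -> exists u, phi X = u ^+ 2.
Hypothesis card_T : #|T| = #|K|.

Definition rho (X : G) : K := r (phi X).
Definition rho_sqrt (X : G) : K := sqrtf (rho X).

Lemma rho_sqrtE {X u} : phi X = u ^+ 2 -> rho_sqrt X = r u.
Proof. by move=> phiX; rewrite /rho_sqrt /rho phiX rmorphXn sqrK. Qed.

Lemma rho_sqrt_inj : {in T &, injective rho_sqrt}.
Proof.
move=> X Y /T_sqr [u phiX] /T_sqr [v phiY] eqXY.
apply: phi_inj; rewrite phiX phiY; apply: sqr_eq_rmorph.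
by rewrite -(rho_sqrtE phiX) -(rho_sqrtE phiY).
Qed.

Lemma rho_inj : {in T &, injective rho}.
Proof. by move=> X Y XT YT eqXY; apply: rho_sqrt_inj => //; rewrite /rho_sqrt eqXY. Qed.

Lemma rho_sqrt_onto (a : K) : exists2 X, X \in T & rho_sqrt X = a.
Proof.
have onto : rho_sqrt @: T = [set: K].
  apply/eqP; rewrite eqEcard subsetT cardsT card_in_imset ?card_T //; first exact: leqnn.
  exact: rho_sqrt_inj.
have /imsetP [X XT ->] : a \in rho_sqrt @: T by rewrite onto inE.
by exists X.
Qed.

Lemma card_T4 (P : pred (K * K * K * K)) :
  #|[set Q : G * G * G * G | [&& Q.1.1.1 \in T, Q.1.1.2 \in T, Q.1.2 \in T,
      Q.2 \in T & P (rho_sqrt Q.1.1.1, rho_sqrt Q.1.1.2, rho_sqrt Q.1.2, rho_sqrt Q.2)]]|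
  = #|[set a | P a]|.
Proof.
pose lift (Q : G * G * G * G) :=
  (rho_sqrt Q.1.1.1, rho_sqrt Q.1.1.2, rho_sqrt Q.1.2, rho_sqrt Q.2).
rewrite -(card_in_imset (f := lift)); last first.
  move=> [[[X1 X2] X3] X4] [[[Y1 Y2] Y3] Y4]; rewrite !inE /=.
  case/and5P => X1T X2T X3T X4T _ /and5P [Y1T Y2T Y3T Y4T _].
  by case=> /(rho_sqrt_inj _ _ X1T Y1T) -> /(rho_sqrt_inj _ _ X2T Y2T) ->
    /(rho_sqrt_inj _ _ X3T Y3T) -> /(rho_sqrt_inj _ _ X4T Y4T) ->.
apply: eq_card => a; rewrite inE; apply/imsetP/idP => [[Q] | Pa].
  by rewrite inE => /and5P [_ _ _ _ PQ] ->.
case: a Pa => [[[a1 a2] a3] a4].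
have [X1 X1T <-] := rho_sqrt_onto a1; have [X2 X2T <-] := rho_sqrt_onto a2.
have [X3 X3T <-] := rho_sqrt_onto a3; have [X4 X4T <-] := rho_sqrt_onto a4.
by move=> Pa; exists (X1, X2, X3, X4); rewrite // inE /= X1T X2T X3T X4T.
Qed.

Definition teich_system (B : G) (D : K) (Q : G * G * G * G) :=
  [&& Q.1.1.1 \in T, Q.1.1.2 \in T, Q.1.2 \in T, Q.2 \in T,
   phi Q.1.1.1 + phi Q.1.1.2 + phi Q.1.2 + phi Q.2 == 2%:R * phi B &
   rho Q.1.1.1 ^+ 3 + rho Q.1.1.2 ^+ 3 + rho Q.1.2 ^+ 3 + rho Q.2 ^+ 3
     == rho B ^+ 3 * D].

Lemma teich_systemE B D X1 X2 X3 X4 : B \in T ->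
  X1 \in T -> X2 \in T -> X3 \in T -> X4 \in T ->
  teich_system B D (X1, X2, X3, X4) =
  residue_system (rho B) D (rho_sqrt X1, rho_sqrt X2, rho_sqrt X3, rho_sqrt X4).
Proof.
move=> /T_sqr [u0 phiB] X1T X2T X3T X4T; rewrite /teich_system /= X1T X2T X3T X4T /=.
have [u1 phiX1] := T_sqr _ X1T; have [u2 phiX2] := T_sqr _ X2T.
have [u3 phiX3] := T_sqr _ X3T; have [u4 phiX4] := T_sqr _ X4T.
have rhoE X u : phi X = u ^+ 2 -> rho X = r u ^+ 2.
  by move=> phiX; rewrite /rho phiX rmorphXn.
rewrite phiX1 phiX2 phiX3 phiX4 phiB sum_sqr_eq_2sqr !rmorphD.
rewrite (rhoE _ _ phiX1) (rhoE _ _ phiX2) (rhoE _ _ phiX3) (rhoE _ _ phiX4).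
rewrite (rhoE _ _ phiB).
rewrite (rho_sqrtE phiX1) (rho_sqrtE phiX2) (rho_sqrtE phiX3) (rho_sqrtE phiX4).
by rewrite /residue_system /= andbA.
Qed.

Lemma card_teich_system B D : B \in T -> rho B != 0 ->
  #|[set Q | teich_system B D Q]| =
  (#|K| * \sum_(t in cubic_roots D) #|quad_fibre (rho B) t|)%N.
Proof.
move=> BT rhoB_neq0; rewrite -card_residue_system // -card_T4.
apply: eq_card => -[[[X1 X2] X3] X4]; rewrite !inE /=.
have [/and4P [X1T X2T X3T X4T] | notT] :=
  boolP [&& X1 \in T, X2 \in T, X3 \in T & X4 \in T].
  by rewrite teich_systemE // X1T X2T X3T X4T.
by rewrite /teich_system /=; move: notT; do 4 case: (_ \in T).
Qed.

End TeichmullerLift.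

End Char2FiniteField.


Lemma red2_is_zmod_morphism : zmod_morphism red2.
Proof. by do 2![case=> [[|[|[|[|//]]]] ?]]; apply/val_inj. Qed.

Lemma red2_is_monoid_morphism : monoid_morphism red2.
Proof.
split; first exact/val_inj.
by do 2![case=> [[|[|[|[|//]]]] ?]]; apply/val_inj.
Qed.

HB.instance Definition _ := GRing.isZmodMorphism.Build _ _ red2 red2_is_zmod_morphism.
HB.instance Definition _ := GRing.isMonoidMorphism.Build _ _ red2 red2_is_monoid_morphism.

Section Reduction.

Context {f : {poly 'Z_4}}.
Hypotheses (monic_f : f \is monic) (size_f_gt1 : (1 < size f)%N).
Variable irr_fbar : monic_irreducible_poly (fbar f).

Local Notation S := {poly %/ f}.
Local Notation K := {poly %/ fbar f with irr_fbar}.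

Lemma mk_monic_f : mk_monic f = f.
Proof. by rewrite /mk_monic size_f_gt1 monic_f. Qed.

Lemma rmodp_mk_monic_f (P : {poly 'Z_4}) : rmodp P (mk_monic f) = rmodp P f.
Proof. by rewrite mk_monic_f. Qed.

Lemma rmodp_mk_monic_fbar (P : {poly 'F_2}) :
  rmodp P (mk_monic (fbar f)) = rmodp P (fbar f).
Proof. by rewrite /mk_monic; case: irr_fbar => -[-> _] ->. Qed.

Definition redq (p : S) : K := in_qpoly (fbar f) (map_poly red2 (p : {poly 'Z_4})).

Lemma redq_is_zmod_morphism : zmod_morphism redq.
Proof. by move=> p q; rewrite /redq /= rmorphB raddfB. Qed.

Lemma red_rmodp (P : {poly 'Z_4}) :
  in_qpoly (fbar f) (map_poly red2 (rmodp P (mk_monic f)))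
  = in_qpoly (fbar f) (map_poly red2 P).
Proof.
rewrite rmodp_mk_monic_f {2}(rdivp_eq monic_f P) rmorphD rmorphM /= -/(fbar f).
rewrite in_qpolyD [X in X + _](_ : _ = 0) ?add0r //.
by apply/val_inj; rewrite /= rmodp_mk_monic_fbar rmodp_mull //; case: irr_fbar.
Qed.

Lemma redq_is_monoid_morphism : monoid_morphism redq.
Proof.
split; first by rewrite /redq /= rmorph1 in_qpoly1.
by move=> p q; rewrite /redq poly_of_qpolyM red_rmodp rmorphM /= in_qpolyM.
Qed.

Definition redq_rmorph : {rmorphism S -> K} :=
  HB.pack_for {rmorphism S -> K} redq
    (GRing.isZmodMorphism.Build _ _ redq redq_is_zmod_morphism)
    (GRing.isMonoidMorphism.Build _ _ redq redq_is_monoid_morphism).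

End Reduction.

Definition half (c : 'Z_4) : 'Z_4 := ((c : nat) %/ 2)%:R.

Lemma red2_eq0_half (c : 'Z_4) : red2 c = 0 -> c = half c *+ 2.
Proof. by case: c => [[|[|[|[|//]]]] ?] /= /(congr1 val) c0; apply/val_inj. Qed.

Lemma mul2_red2_eq0 (c : 'Z_4) : c *+ 2 = 0 -> red2 c = 0.
Proof. by case: c => [[|[|[|[|//]]]] ?] /= /(congr1 val) c0; apply/val_inj. Qed.

Definition teich_count {m : nat} (f : {poly 'Z_4}) (beta B : GR m) (d : Fq m) :=
  #|[set Q : GR m * GR m * GR m * GR m |
     [&& Q.1.1.1 \in Teich f beta, Q.1.1.2 \in Teich f beta,
         Q.1.2 \in Teich f beta, Q.2 \in Teich f beta,
         Q.1.1.1 + Q.1.1.2 + Q.1.2 + Q.2 == B *+ 2 &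
         Fqcube f (redR Q.1.1.1) + Fqcube f (redR Q.1.1.2)
         + Fqcube f (redR Q.1.2) + Fqcube f (redR Q.2)
         == Fqmul f (Fqcube f (redR B)) d]]|.

Section GaloisRingModel.

Context {m : nat} {f : {poly 'Z_4}}.
Hypotheses (monic_f : f \is monic) (size_f : size f = m.+1).
Variable irr_fbar : monic_irreducible_poly (fbar f).

Local Notation S := {poly %/ f}.
Local Notation K := {poly %/ fbar f with irr_fbar}.

Lemma size_fbar : size (fbar f) = m.+1.
Proof. by rewrite size_map_poly_id0 ?size_f // (monicP monic_f) rmorph1 oner_eq0. Qed.

Lemma size_f_gt1 : (1 < size f)%N.
Proof. by rewrite size_f -size_fbar; case: irr_fbar => -[]. Qed.

Lemma m_gt0 : (0 < m)%N.
Proof. by have := size_f_gt1; rewrite size_f. Qed.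

Local Notation r := (redq_rmorph monic_f size_f_gt1 irr_fbar).
Let rmodp_f := rmodp_mk_monic_f monic_f size_f_gt1.
Let rmodp_fbar := rmodp_mk_monic_fbar irr_fbar.

Definition gr_qpoly (u : GR m) : S := in_qpoly f (rVpoly u).
Definition fq_qpoly (u : Fq m) : K := in_qpoly (fbar f) (rVpoly u).

Lemma gr_qpolyK u : (gr_qpoly u : {poly 'Z_4}) = rVpoly u.
Proof. by rewrite /= rmodp_f rmodp_small // size_f ltnS size_poly. Qed.

Lemma fq_qpolyK u : (fq_qpoly u : {poly 'F_2}) = rVpoly u.
Proof. by rewrite /= rmodp_fbar rmodp_small // size_fbar ltnS size_poly. Qed.

Lemma gr_qpoly_inj : injective gr_qpoly.
Proof.
move=> u v /(congr1 (fun p : S => p : {poly 'Z_4})).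
by rewrite !gr_qpolyK => /(can_inj (@rVpolyK _ _)).
Qed.

Lemma fq_qpoly_inj : injective fq_qpoly.
Proof.
move=> u v /(congr1 (fun p : K => p : {poly 'F_2})).
by rewrite !fq_qpolyK => /(can_inj (@rVpolyK _ _)).
Qed.

Lemma gr_qpolyD u v : gr_qpoly (u + v) = gr_qpoly u + gr_qpoly v.
Proof. by rewrite /gr_qpoly linearD in_qpolyD. Qed.

Lemma fq_qpolyD u v : fq_qpoly (u + v) = fq_qpoly u + fq_qpoly v.
Proof. by rewrite /fq_qpoly linearD in_qpolyD. Qed.

Lemma gr_qpoly0 : gr_qpoly 0 = 0.
Proof. by rewrite /gr_qpoly linear0 in_qpoly0. Qed.

Lemma fq_qpoly0 : fq_qpoly 0 = 0.
Proof. by rewrite /fq_qpoly linear0 in_qpoly0. Qed.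

Lemma gr_qpolyM u v : gr_qpoly (GRmul f u v) = gr_qpoly u * gr_qpoly v.
Proof.
apply: val_inj; change (polyn (gr_qpoly (GRmul f u v)) = polyn (gr_qpoly u * gr_qpoly v)).
rewrite poly_of_qpolyM !gr_qpolyK /GRmul poly_rV_K; last first.
  by rewrite -ltnS -size_f ltn_rmodpN0 // -size_poly_gt0 size_f.
by rewrite rmodp_f.
Qed.

Lemma fq_qpolyM u v : fq_qpoly (Fqmul f u v) = fq_qpoly u * fq_qpoly v.
Proof.
have monic_fbar : fbar f \is monic by case: irr_fbar.
apply: val_inj; change (polyn (fq_qpoly (Fqmul f u v)) = polyn (fq_qpoly u * fq_qpoly v)).
rewrite poly_of_qpolyM !fq_qpolyK /Fqmul.
rewrite (Pdiv.IdomainMonic.modpE monic_fbar) poly_rV_K; last first.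
  by rewrite -ltnS -size_fbar ltn_rmodpN0 // -size_poly_gt0 size_fbar.
by rewrite rmodp_fbar.
Qed.

Lemma gr_qpoly1 : gr_qpoly (GRone m f) = 1.
Proof.
apply: val_inj; change (polyn (gr_qpoly (GRone m f)) = polyn (1 : S)).
by rewrite gr_qpolyK /GRone rmodp_small ?poly_rV_K ?size_polyC ?oner_eq0 ?size_f ?ltnS
  ?m_gt0.
Qed.

Lemma gr_qpolyX u k : gr_qpoly (GRexp f u k) = gr_qpoly u ^+ k.
Proof.
elim: k => [|k IHk]; first by rewrite expr0 -gr_qpoly1.
by rewrite exprS -IHk /GRexp iterS -/(GRexp f u k) gr_qpolyM.
Qed.

Lemma fq_qpoly_cube y : fq_qpoly (Fqcube f y) = fq_qpoly y ^+ 3.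
Proof. by rewrite /Fqcube !fq_qpolyM !exprS expr0 mulr1. Qed.

Lemma fq_qpoly_redR X : fq_qpoly (redR X) = r (gr_qpoly X).
Proof. by rewrite /= /redq; congr in_qpoly; rewrite gr_qpolyK map_rVpoly. Qed.

Lemma card_K : #|K| = (2 ^ m)%N.
Proof. by rewrite card_qfpoly size_fbar card_Fp. Qed.

Lemma four_eq0 : 4%:R = 0 :> S.
Proof.
apply: val_inj; change (polyn (4%:R : S) = polyn (0 : S)).
by rewrite qpolyC_natr -polyC_natr (_ : 4%:R = 0 :> 'Z_4) ?polyC0 //; apply/val_inj.
Qed.

Lemma size_qpoly (u : S) : (size (u : {poly 'Z_4}) < m.+1)%N.
Proof.
by apply: leq_trans (size_mk_monic u) _; rewrite (mk_monic_f monic_f size_f_gt1) size_f.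
Qed.

Lemma redq_eq0 (u : S) : (r u == 0) = (map_poly red2 (u : {poly 'Z_4}) == 0).
Proof.
apply/eqP/eqP => [/(congr1 (fun p : K => p : {poly 'F_2})) | red_u0]; last first.
  by rewrite /= /redq red_u0 in_qpoly0.
rewrite /= rmodp_fbar rmodp_small //.
by rewrite size_fbar (leq_ltn_trans (size_poly _ _)) // size_qpoly.
Qed.

Lemma kerr_sub2 (u : S) : r u = 0 -> exists k, u = 2%:R * k.
Proof.
move/eqP; rewrite redq_eq0 => /eqP red_u0.
exists (in_qpoly f (map_poly half u)).
apply: val_inj; change (polyn u = polyn (2%:R * in_qpoly f (map_poly half u))).
rewrite poly_of_qpolyM qpolyC_natr /= !rmodp_f.
rewrite (@rmodp_small _ (map_poly half u)); last first.
  by rewrite size_f (leq_ltn_trans (size_poly _ _)) // size_qpoly.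
have -> : 2%:R * map_poly half u = u.
  apply/polyP => i; rewrite mulr_natl coefMn coef_map_id0 //.
  by apply/esym/red2_eq0_half; have /polyP/(_ i) := red_u0; rewrite coef_map coef0.
by rewrite rmodp_small // size_f size_qpoly.
Qed.

Lemma ann2_sub_kerr (u : S) : 2%:R * u = 0 -> r u = 0.
Proof.
move=> u2_0; have {u2_0} : polyn (2%:R * u) = polyn (0 : S) by rewrite u2_0.
rewrite poly_of_qpolyM qpolyC_natr rmodp_f rmodp_small; last first.
  rewrite size_f (leq_ltn_trans _ (size_qpoly u)) //.
  by rewrite -polyC_natr mul_polyC size_scale_leq.
move=> /polyP coef_u2; apply/eqP; rewrite redq_eq0; apply/eqP/polyP => i.
rewrite coef_map coef0 /=; apply: mul2_red2_eq0.
by have := coef_u2 i; rewrite mulr_natl coefMn coef0.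
Qed.

Context {beta : GR m}.
Hypothesis beta_order : has_order_q1 f beta.

Lemma q1_gt0 : (0 < (2 ^ m).-1)%N.
Proof. by rewrite -subn1 subn_gt0 -[1%N]/(2 ^ 0)%N ltn_exp2l // m_gt0. Qed.

Lemma beta_expq1 : gr_qpoly beta ^+ (2 ^ m).-1 = 1.
Proof. by rewrite -gr_qpolyX beta_order.1 gr_qpoly1. Qed.

(* [beta^i] is the square of [beta^(i 2^(m-1))] because [beta^(q-1) = 1]. *)
Lemma Teich_sqr X : X \in Teich f beta -> exists u, gr_qpoly X = u ^+ 2.
Proof.
rewrite in_setU1 => /orP [/eqP -> | /imsetP [i _ ->]].
  by exists 0; rewrite gr_qpoly0 expr0n.
exists (gr_qpoly beta ^+ (i * 2 ^ m.-1)); rewrite gr_qpolyX; move: (nat_of_ord i) => k.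
rewrite -exprM -mulnA -expnSr prednK ?m_gt0 //.
have -> : (k * 2 ^ m)%N = (k + k * (2 ^ m).-1)%N by rewrite -mulnS prednK // expn_gt0.
by rewrite exprD mulnC exprM beta_expq1 expr1n mulr1.
Qed.

Lemma beta_lreg : GRing.lreg (gr_qpoly beta).
Proof.
apply: (@GRing.lregMl _ (gr_qpoly beta ^+ (2 ^ m).-2)).
by rewrite -exprSr prednK ?q1_gt0 // beta_expq1; exact: GRing.lreg1.
Qed.

Lemma beta_exp_inj : injective (fun i : 'I_(2 ^ m).-1 => GRexp f beta i).
Proof.
move=> i j /(congr1 gr_qpoly) /=; rewrite !gr_qpolyX => eq_ij.
wlog le_ij : i j eq_ij / (i <= j)%N.
  move=> wl; case: (leqP i j) => [/(wl i j eq_ij) // | /ltnW le_ji].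
  exact/esym/(wl j i (esym eq_ij)).
apply/val_inj/eqP; rewrite eqn_leq le_ij /= leqNgt -subn_gt0; apply/negP => ji_gt0.
have /negP : GRexp f beta (j - i) != GRone m f.
  by apply: beta_order.2; rewrite ji_gt0 (leq_ltn_trans (leq_subr _ _)).
apply; apply/eqP/gr_qpoly_inj; rewrite gr_qpolyX gr_qpoly1.
by apply: (GRing.lregX (n := i) beta_lreg); rewrite -exprD subnKC // eq_ij mulr1.
Qed.

Lemma card_Teich : #|Teich f beta| = (2 ^ m)%N.
Proof.
rewrite cardsU1 card_imset ?card_ord; last exact: beta_exp_inj.
have -> : (0 \notin [set GRexp f beta i | i : 'I_(2 ^ m).-1]) = true.
  apply/negP => /imsetP [i _ beta_i0].
  have := GRing.lreg_neq0 (GRing.lregX (n := i) beta_lreg).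
  by rewrite -gr_qpolyX -beta_i0 gr_qpoly0 eqxx.
by rewrite add1n prednK // expn_gt0.
Qed.

Local Notation T := (Teich f beta).
Local Notation rhoGR := (rho r gr_qpoly).

Lemma zero_in_Teich : 0 \in T.
Proof. by rewrite in_setU1 eqxx. Qed.

Lemma rhoGR_neq0 {B} : B \in T -> B != 0 -> rhoGR B != 0.
Proof.
move=> BT; apply: contra_neq => rhoB0.
apply: (rho_inj card_K r four_eq0 kerr_sub2 gr_qpoly T gr_qpoly_inj Teich_sqr) => //.
  exact: zero_in_Teich.
by rewrite rhoB0 /rho gr_qpoly0 rmorph0.
Qed.

Lemma fq_qpoly_bij : bijective fq_qpoly.
Proof.
apply: (@inj_card_bij _ _ _ fq_qpoly_inj).
by rewrite card_K card_mx card_Fp // mul1n.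
Qed.

Lemma Mset_cubic_roots i d :
  (d \in Mset m f i) = (d != 0) && (#|cubic_roots (fq_qpoly d)| == i).
Proof.
rewrite inE -(inj_eq fq_qpoly_inj) fq_qpoly0; congr (_ && (_ == _)).
rewrite -(card_imset _ fq_qpoly_inj); apply: eq_card => t.
have [g _ g_fq] := fq_qpoly_bij; rewrite -[t]g_fq (mem_imset _ _ fq_qpoly_inj) !inE.
by rewrite -fq_qpoly_cube -!fq_qpolyD -fq_qpoly0 (inj_eq fq_qpoly_inj).
Qed.

Lemma card_teich_count B d : B \in T -> B != 0 ->
  teich_count f beta B d =
  (2 ^ m * \sum_(t in cubic_roots (fq_qpoly d)) #|quad_fibre (rhoGR B) t|)%N.
Proof.
move=> BT B_neq0; have card_T : #|T| = #|K| by rewrite card_Teich card_K.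
rewrite -card_K -(card_teich_system card_K r four_eq0 kerr_sub2 ann2_sub_kerr
  gr_qpoly T gr_qpoly_inj Teich_sqr card_T B (fq_qpoly d) BT (rhoGR_neq0 BT B_neq0)).
apply: eq_card => Q; rewrite in_set [in RHS]in_set /teich_system.
do 4 congr (_ && _); congr (_ && _).
  by rewrite -(inj_eq gr_qpoly_inj) !gr_qpolyD mulr_natl.
by rewrite -(inj_eq fq_qpoly_inj) !fq_qpolyD fq_qpolyM !fq_qpoly_cube !fq_qpoly_redR.
Qed.

Lemma teich_count_cases B d : B \in T -> B != 0 ->
  let N := teich_count f beta B d in
  (d = 0 -> N = (3 * 2 ^ m)%N) /\
  (d \in Mset m f 0 :|: Mset m f 1 -> N = 0%N) /\
  (d \in Mset m f 3 -> N = (6 * 2 ^ m)%N).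
Proof.
move=> BT B_neq0 N; have b_neq0 := rhoGR_neq0 BT B_neq0.
have fq_neq0 : d != 0 -> fq_qpoly d != 0 by rewrite -(inj_eq fq_qpoly_inj) fq_qpoly0.
rewrite /N card_teich_count //; split; [|split].
- by move=> ->; rewrite fq_qpoly0 (sum_quad_fibre_cubic0 card_K b_neq0) mulnC.
- rewrite in_setU !Mset_cubic_roots.
  by case/orP => /andP [/fq_neq0 D_neq0 /eqP card_roots];
    rewrite (sum_quad_fibre_le1 card_K b_neq0 D_neq0) ?card_roots ?muln0.
- rewrite Mset_cubic_roots => /andP [/fq_neq0 D_neq0 /eqP card3].
  by rewrite (sum_quad_fibre_3 card_K b_neq0 D_neq0 card3) mulnC.
Qed.

End GaloisRingModel.

Theorem corollaryB10 (m : nat) (f : {poly 'Z_4}) (beta B : GR m) (d : Fq m) :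
  odd m ->
  f \is monic -> size f = m.+1 -> irreducible_poly (fbar f) ->
  has_order_q1 f beta ->
  B \in Teich f beta -> B != 0 ->
  let N := #|[set Q : GR m * GR m * GR m * GR m |
               [&& Q.1.1.1 \in Teich f beta, Q.1.1.2 \in Teich f beta,
                   Q.1.2 \in Teich f beta, Q.2 \in Teich f beta,
                   Q.1.1.1 + Q.1.1.2 + Q.1.2 + Q.2 == B *+ 2 &
                   Fqcube f (redR Q.1.1.1) + Fqcube f (redR Q.1.1.2)
                   + Fqcube f (redR Q.1.2) + Fqcube f (redR Q.2)
                   == Fqmul f (Fqcube f (redR B)) d]]| in
  (d = 0 -> N = (3 * 2 ^ m)%N) /\
  (d \in Mset m f 0 :|: Mset m f 1 -> N = 0%N) /\
  (d \in Mset m f 3 -> N = (6 * 2 ^ m)%N).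
Proof.
move=> _ monic_f size_f irr_f beta_order.
have irr_fbar : monic_irreducible_poly (fbar f) by split => //; exact: monic_map.
exact: (teich_count_cases monic_f size_f irr_fbar beta_order).
Qed.
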